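(* Let $G_1$ be a $(q_1,q_2)$-semi-regular bipartite graph with bipartition $V_1,V_2$, $|V_1|=n_1\le n_2=|V_2|$, $\nu_1=n_1+n_2$, and let $G_2$ be a $(q_3,q_4)$-semi-regular bipartite graph with bipartition $V_3,V_4$, $|V_3|=n_3\le n_4=|V_4|$, $\nu_2=n_3+n_4$. Write $spec(G_1)=\{\pm\lambda_1,\dots,\pm\lambda_{k_1},0^{(\nu_1-2k_1)}\}$ and $spec(G_2)=\{\pm\mu_1,\dots,\pm\mu_{k_2},0^{(\nu_2-2k_2)}\}$ where $k_1,k_2$ are the numbers of positive eigenvalues, $\sqrt{q_1q_2}=\lambda_1\ge\dots\ge\lambda_{k_1}>0$, $\sqrt{q_3q_4}=\mu_1\ge\dots\ge\mu_{k_2}>0$. Then the number of spanning trees of $G=G_1\vee G_2$ is $$\tau(G)=(q_1+q_2+\nu_2)(q_3+q_4+\nu_1)(q_1+\nu_2)^{n_1-k_1}(q_2+\nu_2)^{n_2-k_1}(q_3+\nu_1)^{n_3-k_2}(q_4+\nu_1)^{n_4-k_2}\prod_{i=2}^{k_1}\big[(q_1+\nu_2)(q_2+\nu_2)-\lambda_i^2\big]\prod_{j=2}^{k_2}\big[(q_3+\nu_1)(q_4+\nu_1)-\mu_j^2\big].$$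
   Context: A bipartite graph with bipartition $(V_1,V_2)$ is $(q_1,q_2)$-semi-regular if every vertex of $V_1$ has degree $q_1$ and every vertex of $V_2$ has degree $q_2$ ($q_1,q_2\ge1$). The join $G_1\vee G_2$ has vertex set $V(G_1)\sqcup V(G_2)$ and edge set $E(G_1)\cup E(G_2)\cup\{uv:u\in V(G_1),v\in V(G_2)\}$. $spec$ denotes the multiset of adjacency eigenvalues (exponents in parentheses denote multiplicities); $\tau(G)$ is the number of spanning trees of $G$. *)

From HB Require Import structures.
From mathcomp Require Import all_boot all_order all_algebra.
Set Implicit Arguments. Unset Strict Implicit. Unset Printing Implicit Defensive.
Import Order.TTheory GRing.Theory Num.Theory.

Definition simple_graph (T : finType) (e : rel T) : Prop :=
  symmetric e /\ irreflexive e.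

Definition semi_regular_bip (T : finType) (e : rel T) (V1 V2 : {set T})
  (q1 q2 : nat) : Prop :=
  [/\ V1 :&: V2 = set0, V1 :|: V2 = setT,
      (forall x y, e x y -> (x \in V1) = (y \in V2)),
      (forall x, x \in V1 -> #|[set y | e x y]| = q1) &
      (forall x, x \in V2 -> #|[set y | e x y]| = q2)] /\
  (1 <= q1)%N /\ (1 <= q2)%N.

Definition join_rel (m p : nat) (e1 : rel 'I_m) (e2 : rel 'I_p) : rel 'I_(m + p) :=
  fun i j => match split i, split j with
             | inl a, inl b => e1 a b
             | inr a, inr b => e2 a b
             | _, _ => true
             end.

Definition adjmx (R : nzRingType) (m : nat) (e : rel 'I_m) : 'M[R]_m :=
  \matrix_(i, j) ((e i j)%:R)%R.

(* Acyclicity is expressed as: no edge of F lies on a cycle, i.e. the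
   endpoints of every edge f of F are disconnected in F \ {f}. *)
Definition frel (T : finType) (F : {set {set T}}) : rel T :=
  fun x y => (x != y) && ([set x; y] \in F).

Definition is_edge (T : finType) (e : rel T) (f : {set T}) : bool :=
  [exists x, exists y, e x y && (f == [set x; y])].

Definition spanning_tree (T : finType) (e : rel T) (F : {set {set T}}) : bool :=
  [&& [forall f in F, is_edge e f],
      [forall x, forall y, connect (frel F) x y] &
      [forall f in F, forall x, forall y,
         ((f == [set x; y]) && (x != y)) ==> ~~ connect (frel (F :\ f)) x y]].

Definition num_spanning_trees (T : finType) (e : rel T) : nat :=
  #|[set F : {set {set T}} | spanning_tree e F]|.

(* Matrix-tree theorem in the form det (L + J) = N^2 tau, J the all-ones
   matrix: row i of L + J is the sum of e_i - e_j over the neighbours j of i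
   plus the all-ones row, so expanding the determinant multilinearly leaves
   one term N for each spanning tree and each choice of root (the vertex
   picking the all-ones row), the tree being encoded by its parent function.
   For the join, L + J is block diagonal with blocks L(G1) + nu2 I + J and
   L(G2) + nu1 I + J. A matrix M with constant row sums t has
   det (M + J) = det M (t + n) / t by the rank-one determinant formula, and for
   a (q1,q2)-semi-regular bipartite graph L + t I = diag(a, b) - A, which
   conjugation by diag(sqrt a, sqrt b) turns into a multiple of
   sqrt(ab) I - A; its determinant is read off the spectrum of A. *)

From HB Require Import structures.
From mathcomp Require Import all_boot all_order all_algebra fingroup perm.
From mathcomp Require Import zify ring.

Set Implicit Arguments. Unset Strict Implicit. Unset Printing Implicit Defensive.
Import Order.TTheory GRing.Theory Num.Theory.
Local Open Scope ring_scope.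

Lemma det_sum_family (R : comNzRingType) n (J : finType) (S : 'I_n -> pred J)
    (g : 'I_n -> J -> 'I_n -> R) :
  \det (\matrix_(i, k) \sum_(j | S i j) g i j k) =
  \sum_(f in family S) \det (\matrix_(i, k) g i (f i) k).
Proof.
rewrite /determinant.
transitivity (\sum_(s : 'S_n) \sum_(f in family S) (-1) ^+ s * \prod_i g i (f i) (s i)).
  apply: eq_bigr => s _; rewrite -mulr_sumr; congr (_ * _).
  rewrite -(bigA_distr_big_dep S (fun i j => g i j (s i))).
  by apply: eq_bigr => i _; rewrite mxE.
rewrite exchange_big /=; apply: eq_bigr => f _; apply: eq_bigr => s _.
by congr (_ * _); apply: eq_bigr => i _; rewrite mxE.
Qed.

Lemma det_sum_into_col (R : comNzRingType) n (A : 'M[R]_n) (r : 'I_n) :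
  \det A = \det (\matrix_(i, j) if j == r then \sum_k A i k else A i j).
Proof.
pose Q : 'M[R]_n := \matrix_(i, j) ((i == j) || (j == r))%:R.
have detQ : \det Q = 1.
  rewrite (expand_det_row _ r) (bigD1 r) //= big1 ?addr0; last first.
    by move=> j Hj; rewrite mxE eq_sym (negbTE Hj) /= mul0r.
  rewrite mxE eqxx /= mul1r /cofactor -signr_odd addnn odd_double mul1r.
  have -> : row' r (col' r Q) = 1%:M.
    apply/matrixP => i j; rewrite !mxE (inj_eq (@lift_inj _ r)).
    by rewrite [lift r j == r]eq_sym (negbTE (neq_lift r j)) orbF.
  exact: det1.
rewrite -[LHS]mulr1 -detQ -det_mulmx; congr (\det _); apply/matrixP => i j.
rewrite !mxE; case: (eqVneq j r) => [->|Hj].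
  by apply: eq_bigr => k _; rewrite mxE eqxx orbT mulr1.
rewrite (bigD1 j) //= big1 ?addr0 => [|k Hk]; rewrite mxE.
  by rewrite eqxx mulr1.
by rewrite (negbTE Hk) (negbTE Hj) mulr0.
Qed.

Section FunctionalGraph.
Variables (T : finType) (f : T -> T).

Definition reaches_fixpoint := [forall x, exists y, fconnect f x y && (f y == y)].

Definition cycle_points := [pred y | fconnect f (f y) y && (f y != y)].

Lemma fconnect_iterP x y : reflect (exists n, y = iter n f x) (fconnect f x y).
Proof.
apply: (iffP idP) => [/iter_findex <-|[n ->]]; first by eexists.
exact: fconnect_iter.
Qed.

Lemma iter_cycle p c x : iter p f x = x -> iter (c * p) f x = x.
Proof. by move=> Hp; rewrite iterM iter_fix. Qed.

Lemma cycle_pointsS y : y \in cycle_points -> f y \in cycle_points.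
Proof.
rewrite !inE => /andP[/fconnect_iterP[a Ha] Hy]; apply/andP; split.
  by rewrite {2}Ha -iterS iterSr fconnect_iter.
by apply: contra Hy => /eqP Hff; rewrite {2}Ha iter_fix.
Qed.

Lemma cycle_points_inj y z :
  y \in cycle_points -> z \in cycle_points -> f y = f z -> y = z.
Proof.
rewrite !inE => /andP[/fconnect_iterP[a Ha] _] /andP[/fconnect_iterP[b Hb] _] Hyz.
set w := f y in Ha Hyz.
have Pa : iter a.+1 f w = w by rewrite iterS -Ha.
have Pb : iter b.+1 f w = w by rewrite iterS Hyz -Hb.
have -> : y = iter (b * a.+1 + a) f w by rewrite addnC iterD iter_cycle.
have -> : z = iter (a * b.+1 + b) f w by rewrite addnC iterD iter_cycle // Hyz.
by congr iter; lia.
Qed.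

Lemma cycle_points_surj k : k \in cycle_points -> exists2 j, j \in cycle_points & f j = k.
Proof.
rewrite !inE => /andP[/fconnect_iterP[[|a] Ha] Hk].
  by move: Hk; rewrite /= in Ha; rewrite -Ha eqxx.
exists (iter a f (f k)); last by rewrite -iterS -Ha.
rewrite inE -iterS -Ha -iterSr fconnect_iter /=.
apply: contra Hk => /eqP Hk'.
by apply/eqP; rewrite {2}Ha -iterSr iterS iterS -Hk'.
Qed.

Lemma cycle_points_exists : ~~ reaches_fixpoint -> exists y, y \in cycle_points.
Proof.
move/forallPn => [x0 /existsPn Hx0].
have Hnf y : fconnect f x0 y -> f y != y by move=> Hy; move: (Hx0 y); rewrite Hy.
move: (looping_order f x0) => /trajectP[m Hm Heq].
exists (iter m f x0); rewrite inE Hnf ?fconnect_iter // andbT.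
rewrite -(subnK Hm) iterD iterS in Heq.
by rewrite -{2}Heq fconnect_iter.
Qed.

End FunctionalGraph.

Section FunctionalLaplacian.
Variables (R : fieldType) (n : nat) (f : 'I_n -> 'I_n).

Definition funlap : 'M[R]_n :=
  \matrix_(i, k) ((i == k)%:R - ((f i != i) && (k == f i))%:R).

Lemma funlap_perm_support (s : 'S_n) i :
  funlap i (s i) != 0 -> s i != i -> s i = f i.
Proof.
move=> Hsi Hmoved; move: Hsi; rewrite mxE [i == _]eq_sym (negbTE Hmoved) sub0r oppr_eq0.
by case: (f i != i); case: (s i =P f i) => //= _; rewrite eqxx.
Qed.

(* A permutation with a nonzero term sends every point it moves to its image
   under [f], so the orbit under [f] of a moved point never reaches a fixed
   point. *)
Lemma det_funlap_fixpoint : reaches_fixpoint f -> \det funlap = 1.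
Proof.
move=> Hfix; rewrite /determinant (bigD1 1%g) //= [X in _ + X]big1 ?addr0.
  rewrite odd_perm1 expr0 mul1r; apply: big1 => i _.
  rewrite mxE perm1 eqxx; case: (f i =P i) => [->|/eqP Hf]; first by rewrite eqxx subr0.
  by rewrite eq_sym (negbTE Hf) andbF subr0.
move=> s Hs; case: (pickP (fun i => funlap i (s i) == 0)) => [i /eqP Hi|Hnz].
  by rewrite (bigD1 i) //= Hi mul0r mulr0.
have Hsf i : s i != i -> s i = f i by apply: funlap_perm_support; rewrite Hnz.
have [i0 Hi0] : exists i0, s i0 != i0.
  apply/existsP; apply: contraR Hs => /existsPn Hx; apply/eqP/permP => i.
  by rewrite perm1; move: (Hx i); rewrite negbK => /eqP.
have Hmoved m : s (iter m f i0) != iter m f i0.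
  elim: m => [|m IH] //; rewrite iterS -(Hsf _ IH).
  by apply: contra IH => /eqP/perm_inj {2}<-.
move/forallP: Hfix => /(_ i0) /existsP[y /andP[/iter_findex Hy /eqP Hfy]].
have Hsy := Hmoved (findex f i0 y); rewrite Hy in Hsy.
by move: (Hsy); rewrite {1}(Hsf _ Hsy) Hfy eqxx.
Qed.

(* The indicator of the points on cycles of length >= 2 is in the left
   kernel, as [f] permutes these points. *)
Lemma det_funlap_cycle : ~~ reaches_fixpoint f -> \det funlap = 0.
Proof.
move=> /cycle_points_exists[y0 Hy0]; apply/eqP/det0P.
exists (\row_j ((j \in cycle_points f)%:R)).
  by apply/negP => /eqP /matrixP /(_ 0 y0); rewrite !mxE Hy0 => /eqP; rewrite oner_eq0.
apply/matrixP => z k; rewrite !mxE.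
under eq_bigr => j _ do rewrite !mxE mulr_natl mulrnBl.
rewrite sumrB; apply/eqP; rewrite subr_eq0; apply/eqP.
transitivity ((k \in cycle_points f)%:R : R).
  rewrite (bigD1 k) //= eqxx big1 ?addr0; first by case: (k \in cycle_points f).
  by move=> j /negbTE ->; rewrite mul0rn.
case: (boolP (k \in cycle_points f)) => Hk; last first.
  rewrite big1 // => j _; case: (boolP (j \in cycle_points f)) => Hj; last by rewrite mulr0n.
  case: (eqVneq k (f j)) => [Hkj|]; last by rewrite andbF.
  by move: Hk; rewrite Hkj cycle_pointsS.
have [j0 Hj0 Hfj0] := cycle_points_surj Hk.
rewrite (bigD1 j0) //= Hj0 Hfj0 eqxx andbT big1 ?addr0.
  by move: Hj0; rewrite inE Hfj0 => /andP[_ ->].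
move=> j Hj; case: (boolP (j \in cycle_points f)) => Hjc; last by rewrite mulr0n.
case: (eqVneq k (f j)) => [Hkj|]; last by rewrite andbF.
by move: Hj; rewrite (cycle_points_inj Hjc Hj0) ?eqxx // Hfj0.
Qed.

Lemma det_funlap : \det funlap = (reaches_fixpoint f)%:R.
Proof.
by case: (boolP (reaches_fixpoint f)) => [/det_funlap_fixpoint|/det_funlap_cycle].
Qed.

End FunctionalLaplacian.

Lemma set2_eq_cases (T : finType) (x y a b : T) :
  [set x; y] = [set a; b] -> (x = a /\ y = b) \/ (x = b /\ y = a).
Proof.
move=> E.
have xa : x \in [set a; b] by rewrite -E set21.
have yb : y \in [set a; b] by rewrite -E set22.
have ax : a \in [set x; y] by rewrite E set21.
have bx : b \in [set x; y] by rewrite E set22.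
move/set2P: xa => [] Ex; move/set2P: yb => [] Ey; subst; auto.
  by move/set2P: bx => [] Eb; subst; auto.
by move/set2P: ax => [] Ea; subst; auto.
Qed.

Lemma frel_sym (T : finType) (F : {set {set T}}) : symmetric (frel F).
Proof. by move=> x y; rewrite /frel eq_sym setUC. Qed.

Section SpanningTrees.
Variables (T : finType) (e : rel T).
Hypotheses (e_sym : symmetric e) (e_irr : irreflexive e).
Variable r : T.

Definition parent_fun (f : {ffun T -> T}) :=
  (f r == r) && [forall i, (i != r) ==> e i (f i)].

Definition parent_edges (f : {ffun T -> T}) : {set {set T}} :=
  [set [set i; f i] | i in [set~ r]].

Section ParentEdges.
Variable f : {ffun T -> T}.
Hypotheses (Hf : parent_fun f) (Hfix : reaches_fixpoint f).

Lemma parent_root : f r = r.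
Proof. by case/andP: Hf => /eqP. Qed.

Lemma parent_edge i : i != r -> e i (f i).
Proof. by case/andP: Hf => _ /forallP /(_ i) /implyP. Qed.

Lemma parent_neq i : i != r -> f i != i.
Proof. by move=> /parent_edge; apply: contraTneq => ->; rewrite e_irr. Qed.

Lemma parent_reaches_root x : exists n, iter n f x = r.
Proof.
move/forallP: Hfix => /(_ x) /existsP[y /andP[Hc /eqP Hy]].
have Hyr : y = r by apply/eqP; apply: contraT => /parent_neq; rewrite Hy eqxx.
by exists (findex f x y); rewrite iter_findex // -Hyr.
Qed.

Lemma parent_periodic p x : iter p.+1 f x = x -> x = r.
Proof.
move=> Hp; have [n Hn] := parent_reaches_root x.
have E : (n * p.+1 = (n * p.+1 - n) + n)%N by rewrite subnK // leq_pmulr.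
by rewrite -(iter_cycle n Hp) E iterD Hn iter_fix // parent_root.
Qed.

Lemma parent_edges_connect x y : connect (frel (parent_edges f)) x y.
Proof.
have Hpath n z : connect (frel (parent_edges f)) z (iter n f z).
  elim: n z => [|n IH] z; first exact: connect0.
  rewrite iterSr; case: (eqVneq z r) => [->|Hz]; first by rewrite parent_root; apply: IH.
  apply: connect_trans (IH _); apply: connect1.
  rewrite /frel eq_sym parent_neq //=.
  by apply/imsetP; exists z; rewrite ?in_setC1.
have [n Hn] := parent_reaches_root x; have [m Hm] := parent_reaches_root y.
apply: connect_trans (Hpath n x) _; rewrite Hn -Hm.
by rewrite (sym_connect_sym (@frel_sym _ _)) Hpath.
Qed.

(* Removing the edge [i; f i] disconnects the subtree of i: no remaining
   edge leaves the set of vertices whose path to the root passes through i. *)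
Lemma parent_edges_cut i :
  i != r -> ~~ connect (frel (parent_edges f :\ [set i; f i])) i (f i).
Proof.
move=> Hi; set G := frel (parent_edges f :\ [set i; f i]).
have Hcl : closed G [pred z | fconnect f z i].
  move=> u v /andP[Huv]; rewrite in_setD1 => /andP[Hns /imsetP[j Hj Hj']].
  have Hji : j != i by apply: contraNneq Hns => Ej; rewrite Hj' Ej.
  have Hstep : fconnect f j i = fconnect f (f j) i.
    apply/idP/idP => [/fconnect_iterP[[|n] Hn]|]; last exact: connect_trans (fconnect1 _ _).
      by rewrite Hn eqxx in Hji.
    by rewrite Hn iterSr fconnect_iter.
  by case: (set2_eq_cases Hj') => [[-> ->]|[-> ->]].
apply/negP => /(closed_connect Hcl); rewrite !inE connect0 => /esym.
case/fconnect_iterP => n Hn.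
have : i = r by apply: (@parent_periodic n); rewrite iterSr -Hn.
by move/eqP; rewrite (negbTE Hi).
Qed.

Lemma parent_edges_spanning : spanning_tree e (parent_edges f).
Proof.
apply/and3P; split.
- apply/forallP => s; apply/implyP => /imsetP[i Hi ->].
  apply/existsP; exists i; apply/existsP; exists (f i).
  by rewrite parent_edge ?eqxx // -in_setC1.
- by apply/forallP => x; apply/forallP => y; apply: parent_edges_connect.
apply/forallP => s; apply/implyP => /imsetP[i Hi ->]; rewrite in_setC1 in Hi.
apply/forallP => x; apply/forallP => y; apply/implyP => /andP[/eqP Hs Hxy].
have Gsym : connect_sym (frel (parent_edges f :\ [set i; f i])).
  exact/sym_connect_sym/frel_sym.
case: (set2_eq_cases Hs) => [[<- <-]|[<- <-]]; last rewrite Gsym.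
  all: exact: parent_edges_cut.
Qed.

End ParentEdges.

Lemma parent_edges_inj f g :
  parent_fun f -> reaches_fixpoint f -> parent_fun g -> reaches_fixpoint g ->
  parent_edges f = parent_edges g -> f = g.
Proof.
move=> Hf Hff Hg Hgf E; apply/ffunP => i.
case: (eqVneq i r) => [->|Hi]; first by rewrite !parent_root.
apply/eqP; apply: contraT => Hfg.
have Hdiff m : (iter m g i != r) && (f (iter m g i) != g (iter m g i)).
  elim: m => [|m IH]; first by rewrite Hi Hfg.
  case/andP: IH; set x := iter m g i => Hx Hfx.
  have : [set x; g x] \in parent_edges f.
    by rewrite E; apply/imsetP; exists x; rewrite ?in_setC1.
  case/imsetP => j Hj /set2_eq_cases [[Ej Egj]|[Ej Egj]].
    by move: Hfx; rewrite Egj Ej eqxx.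
  rewrite iterS -/x Egj -in_setC1 Hj /=.
  apply/negP => /eqP Hgg.
  have Hx2 : iter 2 g x = x by rewrite /= Egj -Hgg.
  by move: Hx; rewrite (parent_periodic Hg Hgf Hx2) eqxx.
have [n Hn] := parent_reaches_root Hg Hgf i.
by move: (Hdiff n); rewrite Hn eqxx.
Qed.

Section TreeParent.
Variable F : {set {set T}}.
Hypothesis HF : spanning_tree e F.

Definition tree_path_to_root x n :=
  [exists p : n.-tuple T, path (frel F) x p && (last x p == r)].

Lemma tree_path_to_root_ex x : exists n, tree_path_to_root x n.
Proof.
case/and3P: HF => _ /forallP /(_ x) /forallP /(_ r) /connectP[p Hp Hl] _.
by exists (size p); apply/existsP; exists (in_tuple p); rewrite Hp -Hl eqxx.
Qed.

Definition root_dist x := ex_minn (tree_path_to_root_ex x).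

Lemma root_dist_step x : x != r -> exists y, frel F x y && (root_dist y < root_dist x)%N.
Proof.
move=> Hx; rewrite /root_dist; case: ex_minnP => n /existsP[p /andP[Hp Hl]] Hmin.
case: n p Hp Hl Hmin => [|n] p Hp Hl Hmin.
  by move: Hl; rewrite tuple0 /= (negbTE Hx).
rewrite (tuple_eta p) /= in Hp Hl.
case/andP: Hp => H1 H2; exists (thead p); rewrite H1 /=.
case: ex_minnP => m _ Hm; apply: leq_ltn_trans (Hm n _) _ => //.
by apply/existsP; exists (behead_tuple p); rewrite H2.
Qed.

Definition tree_parent : {ffun T -> T} :=
  [ffun x => if x == r then r
             else odflt r [pick y | frel F x y && (root_dist y < root_dist x)%N]].

Lemma tree_parentP x :
  x != r -> frel F x (tree_parent x) && (root_dist (tree_parent x) < root_dist x)%N.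
Proof.
move=> Hx; rewrite ffunE (negbTE Hx).
case: pickP => [y Hy|Hnone] //=.
by have [y Hy] := root_dist_step Hx; move: (Hnone y); rewrite Hy.
Qed.

Lemma tree_frel_edge x y : frel F x y -> e x y.
Proof.
case/andP=> _ Hs; case/and3P: HF => /forallP /(_ [set x; y]) /implyP /(_ Hs).
case/existsP=> a /existsP[b /andP[Hab /eqP E]] _ _.
by case: (set2_eq_cases E) => [[-> ->]|[-> ->]] //; rewrite e_sym.
Qed.

Lemma tree_parent_fun : parent_fun tree_parent.
Proof.
apply/andP; split; first by rewrite ffunE eqxx.
apply/forallP => x; apply/implyP => Hx.
by case/andP: (tree_parentP Hx) => /tree_frel_edge.
Qed.

Lemma tree_parent_reaches_fixpoint : reaches_fixpoint tree_parent.
Proof.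
have Hreach d x : (root_dist x < d)%N -> fconnect tree_parent x r.
  elim: d x => [|d IH] x //; case: (eqVneq x r) => [->|Hx] Hd; first exact: connect0.
  case/andP: (tree_parentP Hx) => _ Hlt.
  by apply: connect_trans (fconnect1 _ _) (IH _ _); apply: leq_trans Hlt Hd.
apply/forallP => x; apply/existsP; exists r.
by rewrite ffunE !eqxx andbT; apply: (Hreach (root_dist x).+1).
Qed.

(* A spanning tree has no proper spanning subgraph: a missing edge {a, b}
   would stay connected through the others, contradicting acyclicity. *)
Lemma parent_edges_tree_parent : parent_edges tree_parent = F.
Proof.
have sub : parent_edges tree_parent \subset F.
  apply/subsetP => s /imsetP[i Hi ->]; rewrite in_setC1 in Hi.
  by case/andP: (tree_parentP Hi) => /andP[].
apply/eqP; rewrite eqEsubset sub /=; apply/subsetP => s Hs; apply: contraT => Hns.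
case/and3P: HF => /forallP /(_ s) /implyP /(_ Hs) /existsP[a /existsP[b /andP[Hab /eqP Es]]] _.
move/forallP => /(_ s) /implyP /(_ Hs) /forallP /(_ a) /forallP /(_ b) /implyP.
rewrite Es eqxx /=; have -> : a != b by apply: contraTneq Hab => ->; rewrite e_irr.
move=> /(_ isT) /negP Hcut; exfalso; apply: Hcut.
apply: connect_sub (parent_edges_connect tree_parent_fun tree_parent_reaches_fixpoint a b).
move=> u v /andP[Huv Hin]; apply: connect1.
rewrite /frel Huv in_setD1 -Es (subsetP sub _ Hin) andbT.
by apply: contraNneq Hns => <-.
Qed.

End TreeParent.

Lemma card_parent_funs :
  #|[set f : {ffun T -> T} | parent_fun f && reaches_fixpoint f]| = num_spanning_trees e.
Proof.
rewrite /num_spanning_trees.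
have -> : [set F : {set {set T}} | spanning_tree e F] =
          parent_edges @: [set f : {ffun T -> T} | parent_fun f && reaches_fixpoint f].
  apply/setP => F; rewrite inE; apply/idP/imsetP.
    move=> HF; exists (tree_parent HF); last by rewrite parent_edges_tree_parent.
    by rewrite inE tree_parent_fun tree_parent_reaches_fixpoint.
  by case=> f; rewrite inE => /andP[Hf Hfix] ->; apply: parent_edges_spanning.
rewrite card_in_imset // => f g; rewrite !inE => /andP[Hf Hff] /andP[Hg Hgf].
exact: parent_edges_inj.
Qed.

End SpanningTrees.

Definition laplacian (R : nzRingType) n (e : rel 'I_n) : 'M[R]_n :=
  \matrix_(i, j) (#|[set y | e i y]|%:R *+ (i == j) - (e i j)%:R).

Lemma card_set_sum_bool (T : finType) (P : pred T) : #|[set x | P x]| = (\sum_x P x)%N.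
Proof.
rewrite -sum1_card big_mkcond /=; apply: eq_bigr => x _; rewrite inE; by case: (P x).
Qed.

(* Row [i] of [L + J] is the sum, over [j] adjacent to [i], of [e_i - e_j],
   plus the all-ones row, which we index by [j = i]. Expanding the
   determinant multilinearly, a choice of one term per row is a function
   [f] with [f i] adjacent or equal to [i]. *)
Section MatrixTree.
Variables (R : fieldType) (N : nat) (e : rel 'I_N).
Hypotheses (e_sym : symmetric e) (e_irr : irreflexive e).

Definition star_row (i j k : 'I_N) : R :=
  if j == i then 1 else (i == k)%:R - (j == k)%:R.

Definition closed_nbhd (i : 'I_N) : pred 'I_N := fun j => e i j || (j == i).

Definition choice_mx (f : 'I_N -> 'I_N) : 'M[R]_N := \matrix_(i, k) star_row i (f i) k.

Lemma laplacian_add_ones :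
  laplacian R e + const_mx 1 = \matrix_(i, k) \sum_(j | closed_nbhd i j) star_row i j k.
Proof.
apply/matrixP => i k; rewrite !mxE (bigD1 i) /=; last by rewrite /closed_nbhd eqxx orbT.
rewrite /star_row eqxx addrC; congr (_ + _).
rewrite (eq_bigl (e i)); last first.
  by move=> j; rewrite /closed_nbhd; case: (eqVneq j i) => [->|]; rewrite ?e_irr ?orbF ?andbT.
rewrite (eq_bigr (fun j => (i == k)%:R - (j == k)%:R)); last first.
  by move=> j Hj; case: (eqVneq j i) Hj => [->|]; rewrite ?e_irr.
rewrite sumrB sumr_const; congr (_ - _).
  have -> : #|[set y | e i y]| = #|e i| by apply: eq_card => y; rewrite inE.
  by case: (i == k); rewrite ?mulr0n ?mul0rn ?mulr1n.
case: (boolP (e i k)) => Hik.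
  by rewrite (bigD1 k) //= eqxx big1 ?addr0 // => j /andP[_ /negbTE ->].
by rewrite big1 // => j Hj; case: (eqVneq j k) Hj => [->|]; rewrite ?(negbTE Hik).
Qed.

(* Adding all columns to column [r] leaves [N] at [(r, r)] and zeros in the
   rest of that column; the complementary minor is that of [funlap f]. *)
Lemma det_choice_mx_rooted (f : 'I_N -> 'I_N) (r : 'I_N) :
  f r = r -> (forall i, i != r -> f i != i) ->
  \det (choice_mx f) = N%:R * \det (funlap R f).
Proof.
move=> Hr Hn; rewrite (det_sum_into_col _ r) (expand_det_col _ r) (bigD1 r) //=.
rewrite big1 ?addr0 => [|i Hi]; last first.
  rewrite mxE eqxx (eq_bigr (fun k => (i == k)%:R - (f i == k)%:R)); last first.
    by move=> k _; rewrite mxE /star_row (negbTE (Hn _ Hi)).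
  rewrite sumrB (bigD1 i) //= [X in _ - X](bigD1 (f i)) //= !eqxx.
  by rewrite !big1 ?addr0 ?subrr ?mul0r // => k /negbTE; rewrite eq_sym => ->.
rewrite mxE eqxx (eq_bigr (fun k => 1)); last by move=> k _; rewrite mxE /star_row Hr eqxx.
rewrite sumr_const card_ord (expand_det_row (funlap R f) r) (bigD1 r) //=.
rewrite big1 ?addr0 => [|j Hj]; last by rewrite mxE Hr eqxx /= eq_sym (negbTE Hj) subr0 mul0r.
rewrite mxE Hr !eqxx /= subr0 mul1r; congr (_ * _); rewrite /cofactor; congr (_ * \det _).
have Hl a : lift r a != r by rewrite eq_sym neq_lift.
apply/matrixP => i j; rewrite !mxE (negbTE (Hl j)) /star_row (negbTE (Hn _ (Hl i))).
by rewrite [lift r j == _]eq_sym.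
Qed.

Lemma parent_fun_family r (f : {ffun 'I_N -> 'I_N}) :
  parent_fun e r f -> f \in family closed_nbhd.
Proof.
case/andP => /eqP Hfr /forallP Hall; apply/familyP => i; rewrite unfold_in /closed_nbhd.
case: (eqVneq i r) => [->|Hi]; first by rewrite Hfr eqxx orbT.
by move/implyP: (Hall i) => /(_ Hi) ->.
Qed.

(* Without a root, [f] either has no fixed point, and then [choice_mx f] is
   [funlap f], or it has two, giving two all-ones rows; a single fixed point
   would be a root. *)
Lemma det_choice_mx_unrooted (f : {ffun 'I_N -> 'I_N}) : (0 < N)%N ->
  f \in family closed_nbhd -> (forall r, ~~ parent_fun e r f) -> \det (choice_mx f) = 0.
Proof.
move=> N0 /familyP Hfam Hnr.
case: (pickP (fun i => f i == i)) => [i1 Hi1|Hnf]; last first.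
  have -> : choice_mx f = funlap R f.
    by apply/matrixP => i k; rewrite !mxE /star_row Hnf /= [k == _]eq_sym.
  rewrite det_funlap; case: (boolP (reaches_fixpoint f)) => // /forallP /(_ (Ordinal N0)).
  by case/existsP => y /andP[_]; rewrite Hnf.
case: (pickP (fun i => (f i == i) && (i != i1))) => [i2 /andP[Hi2 H21]|Hno].
  by apply: (@determinant_alternate _ _ _ i2 i1) => // k; rewrite !mxE /star_row Hi1 Hi2.
move: (Hnr i1); rewrite /parent_fun Hi1 /=; move/negP; case.
apply/forallP => i; apply/implyP => Hi; move: (Hfam i) (Hno i).
rewrite Hi andbT unfold_in /closed_nbhd => He Hfi.
by rewrite Hfi orbF in He.
Qed.

Lemma det_choice_mx (f : {ffun 'I_N -> 'I_N}) : (0 < N)%N -> f \in family closed_nbhd ->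
  \det (choice_mx f) = N%:R * \sum_r (parent_fun e r f && reaches_fixpoint f)%:R.
Proof.
move=> N0 Hfam; case: (pickP (parent_fun e ^~ f)) => [r Hr|Hnr]; last first.
  by rewrite big1 ?mulr0 ?det_choice_mx_unrooted // => r; rewrite Hnr.
have Hfr : f r = r by case/andP: Hr => /eqP.
have Hedge i : i != r -> e i (f i) by case/andP: Hr => _ /forallP /(_ i) /implyP.
rewrite (bigD1 r) //= Hr big1 ?addr0 => [|r' Hr']; last first.
  case: (boolP (parent_fun e r' f)) => //= /andP[/eqP Hr'f _].
  by move: (Hedge r' Hr'); rewrite Hr'f e_irr.
rewrite (det_choice_mx_rooted Hfr) ?det_funlap // => i /Hedge.
by apply: contraTneq => ->; rewrite e_irr.
Qed.

Theorem det_laplacian_add_ones : (0 < N)%N ->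
  \det (laplacian R e + const_mx 1) = (N * N * num_spanning_trees e)%:R.
Proof.
move=> N0; rewrite laplacian_add_ones det_sum_family.
rewrite (eq_bigr _ (fun f => det_choice_mx N0)) -mulr_sumr exchange_big /=.
rewrite (eq_bigr (fun r => (num_spanning_trees e)%:R)); last first.
  move=> r _; rewrite -(card_parent_funs e_sym e_irr r) card_set_sum_bool natr_sum.
  rewrite big_mkcond /=; apply: eq_bigr => f _.
  case: (boolP (f \in family closed_nbhd)) => // Hfam.
  by case: (boolP (parent_fun e r f)) => //= /parent_fun_family; rewrite (negbTE Hfam).
by rewrite sumr_const card_ord !natrM -mulr_natr; ring.
Qed.

End MatrixTree.

Lemma det_add_rank1 (R : comNzRingType) n (u : 'cV[R]_n) (v : 'rV[R]_n) :
  \det (1%:M + u *m v) = 1 + (v *m u) 0 0.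
Proof.
have E1 : block_mx 1%:M (- u) v 1%:M =
          block_mx 1%:M 0 v 1%:M *m block_mx 1%:M (- u) 0 (1%:M + v *m u).
  rewrite mulmx_block ?mul1mx ?mul0mx ?mulmx1 ?mulmx0 ?addr0 ?add0r ?mulmxN ?mulNmx.
  by rewrite [- _ + _]addrC addrK.
have E2 : block_mx 1%:M (- u) v 1%:M =
          block_mx (1%:M + u *m v) (- u) 0 1%:M *m block_mx 1%:M 0 v 1%:M.
  rewrite mulmx_block ?mul1mx ?mul0mx ?mulmx1 ?mulmx0 ?addr0 ?add0r ?mulmxN ?mulNmx.
  by rewrite addrK.
have := congr1 determinant E1; rewrite {1}E2 !det_mulmx det_lblock !det_ublock.
by rewrite !det1 !mul1r !mulr1 det_mx11 !mxE => ->.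
Qed.

(* If every row of [M] sums to [t], then [M + J = M (I + J / t)] and
   [det (I + J / t) = 1 + n / t] by the rank-one formula. *)
Lemma det_add_const1 (R : fieldType) n (M : 'M[R]_n) (t : R) :
  (forall i, \sum_k M i k = t) -> t != 0 ->
  \det (M + const_mx 1) = \det M * (t + n%:R) / t.
Proof.
move=> Hrow Ht; set J : 'M[R]_n := const_mx 1.
have MJ : M *m J = t *: J.
  apply/matrixP => i j; rewrite !mxE -(Hrow i) mulr1.
  by apply: eq_bigr => k _; rewrite mxE mulr1.
have -> : M + J = M *m (1%:M + (t^-1 *: (const_mx 1 : 'cV[R]_n)) *m const_mx 1).
  rewrite mulmxDr mulmx1 -scalemxAl -scalemxAr; congr (_ + _).
  have -> : (const_mx 1 : 'cV[R]_n) *m (const_mx 1 : 'rV[R]_n) = J.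
    by apply/matrixP => i j; rewrite !mxE big_ord1 !mxE mulr1.
  by rewrite MJ scalerA mulVf // scale1r.
rewrite det_mulmx det_add_rank1 !mxE.
under eq_bigr do rewrite !mxE mulr1 mul1r.
by rewrite sumr_const card_ord -mulr_natr -mulrA; congr (_ * _); field.
Qed.

Lemma char_poly_horner (R : comNzRingType) n (A : 'M[R]_n) (s : R) :
  (char_poly A).[s] = \det (s%:M - A).
Proof.
rewrite /char_poly -horner_evalE -det_map_mx; congr (\det _).
apply/matrixP => i j; rewrite /char_poly_mx !mxE /= horner_evalE hornerD hornerN hornerC.
by rewrite hornerMn hornerX.
Qed.

Lemma poly_eq0_on_pos (R : realFieldType) (q : {poly R}) :
  (forall x, 0 < x -> q.[x] = 0) -> q = 0.
Proof.
move=> Hq; apply/eqP; apply: contraT => Hq0.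
have := max_poly_roots Hq0 (rs := [seq i.+1%:R | i <- iota 0 (size q)]).
rewrite size_map size_iota ltnn; apply.
  by apply/allP => x /mapP[i _ ->]; apply/eqP/Hq; rewrite ltr0Sn.
by rewrite map_inj_uniq ?iota_uniq // => i j /eqP; rewrite eqr_nat => /eqP [] ->.
Qed.

Section Bipartite.
Variables (R : rcfType) (n : nat) (e : rel 'I_n) (V1 V2 : {set 'I_n}) (lam : seq R).
Hypotheses (V12_disj : V1 :&: V2 = set0) (V12_cover : V1 :|: V2 = setT).
Hypotheses (e_bip : forall x y, e x y -> (x \in V1) = (y \in V2)) (e_irr : irreflexive e).
Hypothesis char_e : char_poly (adjmx R e) =
  \prod_(x <- lam ++ map -%R lam ++ nseq (n - 2 * size lam) 0) ('X - x%:P).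

Lemma in_V2 x : (x \in V2) = (x \notin V1).
Proof.
case: (boolP (x \in V1)) => H1 /=.
  apply/negP => H2; have : x \in V1 :&: V2 by rewrite inE H1 H2.
  by rewrite V12_disj inE.
have : x \in V1 :|: V2 by rewrite V12_cover inE.
by rewrite inE (negbTE H1).
Qed.

Lemma size_spec_le : (2 * size lam <= n)%N.
Proof.
have := size_char_poly (adjmx R e); rewrite char_e size_prod_XsubC.
by rewrite !size_cat size_map size_nseq => -[]; lia.
Qed.

Lemma det_sub_adj (s : R) :
  \det (s%:M - adjmx R e) = s ^+ (n - 2 * size lam) * \prod_(l <- lam) (s ^+ 2 - l ^+ 2).
Proof.
rewrite -char_poly_horner char_e horner_prod !big_cat /= big_map big_nseq.
rewrite mulrA mulrC -big_split /=; congr (_ * _).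
  by rewrite hornerXsubC subr0; elim: (n - 2 * size lam)%N => //= m ->; rewrite exprS.
by apply: eq_bigr => l _; rewrite !hornerXsubC opprK -subr_sqr.
Qed.

Definition bip_diag (a b : R) : 'rV[R]_n := \row_i (if i \in V1 then a else b).

Definition bip_shift_mx (a b : R) : 'M[R]_n :=
  \matrix_(i, j) ((if i \in V1 then a else b) *+ (i == j) - (e i j)%:R).

Lemma prod_bip_diag (a b : R) : \prod_i bip_diag a b 0 i = a ^+ #|V1| * b ^+ #|V2|.
Proof.
rewrite (bigID (mem V1)) /=; under eq_bigr => i Hi do rewrite mxE Hi.
under [X in _ * X]eq_bigr => i /negbTE Hi do rewrite mxE Hi.
rewrite !prodr_const; congr (_ ^+ _ * _ ^+ _).
by apply: eq_card => x; rewrite [in RHS]in_V2 unfold_in.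
Qed.

Lemma bip_shift_mx_conj (s1 s2 : R) :
  diag_mx (bip_diag s1 s2) *m ((s1 * s2)%:M - adjmx R e) *m diag_mx (bip_diag s1 s2) =
  (s1 * s2) *: bip_shift_mx (s1 ^+ 2) (s2 ^+ 2).
Proof.
apply/matrixP => i j; rewrite mul_mx_diag mul_diag_mx !mxE.
case: (eqVneq i j) => [<-|Hij]; rewrite ?e_irr /= ?mulr1n ?mulr0n ?subr0 ?sub0r.
  by case: (i \in V1); ring.
case: (boolP (e i j)) => [Heij|_]; last by rewrite !oppr0 !mulr0 mul0r.
by have := e_bip Heij; rewrite in_V2; case: (i \in V1); case: (j \in V1) => // _; ring.
Qed.

Lemma det_bip_shift_mx (a b : R) : 0 < a -> 0 < b ->
  \det (bip_shift_mx a b) * (a * b) ^+ size lam =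
  a ^+ #|V1| * b ^+ #|V2| * \prod_(l <- lam) (a * b - l ^+ 2).
Proof.
move=> a0 b0; set s1 := Num.sqrt a; set s2 := Num.sqrt b.
have s1a : s1 ^+ 2 = a by rewrite sqr_sqrtr // ltW.
have s2b : s2 ^+ 2 = b by rewrite sqr_sqrtr // ltW.
have s0 : s1 * s2 != 0 by rewrite mulf_neq0 // gt_eqF // sqrtr_gt0.
have sab : (s1 * s2) ^+ 2 = a * b by rewrite exprMn s1a s2b.
have := congr1 determinant (bip_shift_mx_conj s1 s2).
rewrite !det_mulmx detZ det_sub_adj !det_diag mulrAC -big_split /= s1a s2b sab.
under eq_bigr do rewrite -expr2.
rewrite -prod_bip_diag.
have -> : \prod_i bip_diag s1 s2 0 i ^+ 2 = \prod_i bip_diag a b 0 i.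
  by apply: eq_bigr => i _; rewrite !mxE; case: (i \in V1).
rewrite prod_bip_diag => Hdet.
apply: (mulfI (expf_neq0 (n - 2 * size lam) s0)); rewrite [RHS]mulrCA Hdet -sab -exprM.
by rewrite mulrCA -exprD subnK ?size_spec_le // mulrC.
Qed.

(* [det (bip_shift_mx x 1) * x^k = x^|V1| * prod (x - l^2)] holds for all
   [x > 0], hence as polynomials in [x]; the right side has valuation
   [|V1|] because no [l] vanishes, so [k <= |V1|]. *)
Lemma size_spec_le_V1 : all (fun x => 0 < x) lam -> (size lam <= #|V1|)%N.
Proof.
move=> lam_pos.
set p : {poly R} := \det (\matrix_(i, j) ((if i \in V1 then 'X else 1) *+ (i == j) - (e i j)%:R)).
have Hp a : p.[a] = \det (bip_shift_mx a 1).
  rewrite -horner_evalE -det_map_mx; congr (\det _); apply/matrixP => i j.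
  rewrite !mxE /= horner_evalE hornerD hornerN !hornerMn -!polyC1 hornerC.
  by case: (i \in V1); rewrite ?hornerX ?hornerC.
set P := \prod_(l <- lam) ('X - (l ^+ 2)%:P).
have Hq : p * 'X^(size lam) - 'X^#|V1| * P = 0.
  apply: poly_eq0_on_pos => a a0.
  rewrite hornerD hornerN !hornerM Hp !hornerXn horner_prod.
  have := det_bip_shift_mx a0 ltr01; rewrite !mulr1 expr1n mulr1 => ->.
  apply/eqP; rewrite subr_eq0; apply/eqP; congr (_ * _).
  by apply: eq_bigr => l _; rewrite hornerXsubC.
rewrite leqNgt; apply/negP => Hlt.
move: (congr1 (fun q : {poly R} => q`_#|V1|) Hq) => /=.
rewrite coefB coefMXn coefXnM Hlt ltnn subnn coef0 sub0r => /eqP; rewrite oppr_eq0.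
rewrite -horner_coef0 horner_prod; apply/negP; rewrite prodf_seq_neq0.
apply/allP => l Hl /=; rewrite hornerXsubC sub0r oppr_eq0 expf_neq0 //.
by move/allP: lam_pos => /(_ l Hl) /gt_eqF ->.
Qed.

Lemma det_bip_shift_mxE (a b : R) : 0 < a -> 0 < b ->
  all (fun x => 0 < x) lam -> (#|V1| <= #|V2|)%N ->
  \det (bip_shift_mx a b) =
  a ^+ (#|V1| - size lam) * b ^+ (#|V2| - size lam) * \prod_(l <- lam) (a * b - l ^+ 2).
Proof.
move=> a0 b0 lam_pos V12.
have k1 := size_spec_le_V1 lam_pos; have k2 := leq_trans k1 V12.
apply: (@mulIf _ ((a * b) ^+ size lam)); first by rewrite expf_neq0 // mulf_neq0 // gt_eqF.
rewrite det_bip_shift_mx // exprMn -{1}(subnK k1) -{1}(subnK k2) !exprD; ring.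
Qed.

End Bipartite.

Section Join.
Variables (m p : nat) (e1 : rel 'I_m) (e2 : rel 'I_p).
Local Notation e := (join_rel e1 e2).

Lemma join_rel_ll i j : e (lshift p i) (lshift p j) = e1 i j.
Proof. by rewrite /join_rel !(unsplitK (inl _)). Qed.

Lemma join_rel_rr i j : e (rshift m i) (rshift m j) = e2 i j.
Proof. by rewrite /join_rel !(unsplitK (inr _)). Qed.

Lemma join_rel_lr i j : e (lshift p i) (rshift m j).
Proof. by rewrite /join_rel (unsplitK (inl _)) (unsplitK (inr _)). Qed.

Lemma join_rel_rl i j : e (rshift m i) (lshift p j).
Proof. by rewrite /join_rel (unsplitK (inl _)) (unsplitK (inr _)). Qed.

Lemma join_rel_sym : symmetric e1 -> symmetric e2 -> symmetric e.
Proof.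
move=> s1 s2 i j; case: (split_ordP i) => i' ->; case: (split_ordP j) => j' ->;
by rewrite ?join_rel_ll ?join_rel_rr ?join_rel_lr ?join_rel_rl.
Qed.

Lemma join_rel_irr : irreflexive e1 -> irreflexive e2 -> irreflexive e.
Proof.
by move=> s1 s2 i; case: (split_ordP i) => i' ->; rewrite ?join_rel_ll ?join_rel_rr.
Qed.

Lemma join_deg_l i : #|[set y | e (lshift p i) y]| = (#|[set y | e1 i y]| + p)%N.
Proof.
rewrite !card_set_sum_bool big_split_ord /=; congr (_ + _)%N.
  by apply: eq_bigr => y _; rewrite join_rel_ll.
by rewrite (eq_bigr (fun _ => 1%N)) ?sum_nat_const ?card_ord ?muln1 // => y _; rewrite join_rel_lr.
Qed.

Lemma join_deg_r i : #|[set y | e (rshift m i) y]| = (#|[set y | e2 i y]| + m)%N.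
Proof.
rewrite !card_set_sum_bool big_split_ord /= addnC; congr (_ + _)%N.
  by apply: eq_bigr => y _; rewrite join_rel_rr.
by rewrite (eq_bigr (fun _ => 1%N)) ?sum_nat_const ?card_ord ?muln1 // => y _; rewrite join_rel_rl.
Qed.

(* The join edges contribute [p] resp. [m] to the degrees and fill the
   off-diagonal blocks of [L] with [-1], which [J] cancels. *)
Lemma laplacian_join_add_ones (R : nzRingType) :
  laplacian R e + const_mx 1 =
  block_mx (laplacian R e1 + p%:R%:M + const_mx 1) 0
           0 (laplacian R e2 + m%:R%:M + const_mx 1).
Proof.
apply/matrixP => i j; case: (split_ordP i) => i' ->; case: (split_ordP j) => j' ->;
rewrite ?block_mxEul ?block_mxEur ?block_mxEdl ?block_mxEdr !mxE.
- rewrite join_deg_l join_rel_ll (inj_eq (@lshift_inj _ _)) natrD mulrnDl.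
  by congr (_ + _); rewrite addrAC.
- by rewrite eq_lrshift join_rel_lr mulr0n sub0r addNr.
- by rewrite eq_rlshift join_rel_rl mulr0n sub0r addNr.
- rewrite join_deg_r join_rel_rr (inj_eq (@rshift_inj _ _)) natrD mulrnDl.
  by congr (_ + _); rewrite addrAC.
Qed.

End Join.

Lemma laplacian_row_sum (R : nzRingType) n (e : rel 'I_n) i : \sum_k laplacian R e i k = 0.
Proof.
under eq_bigr do rewrite mxE; rewrite sumrB (bigD1 i) //= eqxx big1 ?addr0.
  by rewrite mulr1n -natr_sum -card_set_sum_bool subrr.
by move=> k /negbTE; rewrite eq_sym => ->; rewrite mulr0n.
Qed.

Section SemiRegular.
Variables (R : rcfType) (n : nat) (e : rel 'I_n) (V1 V2 : {set 'I_n}) (q1 q2 : nat).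
Variable lam : seq R.
Hypotheses (e_simple : simple_graph e) (e_semi : semi_regular_bip e V1 V2 q1 q2).
Hypothesis char_e : char_poly (adjmx R e) =
  \prod_(x <- lam ++ map -%R lam ++ nseq (n - 2 * size lam) 0) ('X - x%:P).
Hypothesis head_lam : head 0 lam = Num.sqrt (q1 * q2)%:R.

Lemma semi_regular_spec_head : exists2 lam', lam = Num.sqrt (q1 * q2)%:R :: lam' &
  Num.sqrt (q1 * q2)%:R ^+ 2 = (q1 * q2)%:R :> R.
Proof.
case: e_semi => _ [q1_gt0 q2_gt0]; rewrite sqr_sqrtr ?ler0n //.
case: lam head_lam => [|l lam'] /= Hl; last by exists lam'; rewrite -?Hl.
by move/eqP: Hl; rewrite eq_sym sqrtr_eq0 lern0 muln_eq0 !eqn0Ngt q1_gt0 q2_gt0.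
Qed.

Lemma semi_regular_order_gt0 : (0 < n)%N.
Proof.
have [lam' Hlam _] := semi_regular_spec_head.
by have := size_spec_le char_e; rewrite Hlam /=; lia.
Qed.

Lemma laplacian_semi_regular_shift (t : nat) :
  laplacian R e + t%:R%:M = bip_shift_mx e V1 (q1 + t)%:R (q2 + t)%:R.
Proof.
case: e_semi => -[V12_disj V12_cover _ deg1 deg2] _.
apply/matrixP => i j; rewrite !mxE; case: (boolP (i \in V1)) => Hi.
  by rewrite deg1 // natrD addrAC -mulrnDl.
by rewrite deg2 ?(in_V2 V12_disj V12_cover) // natrD addrAC -mulrnDl.
Qed.

Lemma det_laplacian_semi_regular (t : nat) :
  all (fun x => 0 < x) lam -> (#|V1| <= #|V2|)%N -> (0 < t)%N ->
  \det (laplacian R e + t%:R%:M + const_mx 1) =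
  (n + t)%:R * (q1 + q2 + t)%:R * (q1 + t)%:R ^+ (#|V1| - size lam)
  * (q2 + t)%:R ^+ (#|V2| - size lam)
  * \prod_(l <- behead lam) ((q1 + t)%:R * (q2 + t)%:R - l ^+ 2).
Proof.
move=> lam_pos V12 t_gt0.
case: e_simple e_semi => _ e_irr [[V12_disj V12_cover e_bip _ _] [q1_gt0 q2_gt0]].
have t_neq0 : t%:R != 0 :> R by rewrite pnatr_eq0 -lt0n.
have row_sum i : \sum_k (laplacian R e + t%:R%:M) i k = t%:R.
  rewrite (eq_bigr (fun k => laplacian R e i k + t%:R%:M i k)) => [|k _]; last by rewrite mxE.
  rewrite big_split /= laplacian_row_sum add0r (bigD1 i) //= big1 ?addr0 => [|k Hk].
    by rewrite mxE eqxx mulr1n.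
  by rewrite mxE eq_sym (negbTE Hk) mulr0n.
rewrite (det_add_const1 row_sum) // laplacian_semi_regular_shift.
rewrite (det_bip_shift_mxE V12_disj V12_cover e_bip e_irr char_e)
  ?ltr0n ?addn_gt0 ?q1_gt0 ?q2_gt0 //.
have [lam' -> sqr_head] := semi_regular_spec_head; rewrite big_cons sqr_head /=.
have -> : (q1 + t)%:R * (q2 + t)%:R - (q1 * q2)%:R = t%:R * (q1 + q2 + t)%:R :> R.
  by rewrite !natrD !natrM; ring.
by rewrite natrD; field.
Qed.

End SemiRegular.

Unset Implicit Arguments.
Set Strict Implicit.

Theorem theorem4p1 (R : rcfType) (nu1 nu2 : nat)
  (e1 : rel 'I_nu1) (e2 : rel 'I_nu2)
  (V1 V2 : {set 'I_nu1}) (V3 V4 : {set 'I_nu2})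
  (q1 q2 q3 q4 : nat) (lam mu : seq R) :
  simple_graph e1 -> simple_graph e2 ->
  semi_regular_bip e1 V1 V2 q1 q2 ->
  semi_regular_bip e2 V3 V4 q3 q4 ->
  (#|V1| <= #|V2|)%N -> (#|V3| <= #|V4|)%N ->
  (* spec(G1) = {± lam_1, ..., ± lam_k1, 0^(nu1 - 2 k1)}, k1 = size lam *)
  char_poly (adjmx R e1) =
    \prod_(x <- lam ++ map -%R lam ++ nseq (nu1 - 2 * size lam) 0) ('X - x%:P) ->
  char_poly (adjmx R e2) =
    \prod_(x <- mu ++ map -%R mu ++ nseq (nu2 - 2 * size mu) 0) ('X - x%:P) ->
  all (fun x => 0 < x) lam -> all (fun x => 0 < x) mu ->
  sorted >=%R lam -> sorted >=%R mu ->
  head 0 lam = Num.sqrt (q1 * q2)%:R -> head 0 mu = Num.sqrt (q3 * q4)%:R ->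
  (num_spanning_trees (join_rel e1 e2))%:R =
    (q1 + q2 + nu2)%:R * (q3 + q4 + nu1)%:R
    * (q1 + nu2)%:R ^+ (#|V1| - size lam) * (q2 + nu2)%:R ^+ (#|V2| - size lam)
    * (q3 + nu1)%:R ^+ (#|V3| - size mu) * (q4 + nu1)%:R ^+ (#|V4| - size mu)
    * \prod_(l <- behead lam) ((q1 + nu2)%:R * (q2 + nu2)%:R - l ^+ 2)
    * \prod_(l <- behead mu) ((q3 + nu1)%:R * (q4 + nu1)%:R - l ^+ 2) :> R.
Proof.
move=> sg1 sg2 sr1 sr2 V12 V34 char1 char2 lam_pos mu_pos _ _ head1 head2.
have nu1_gt0 := semi_regular_order_gt0 sr1 char1 head1.
have nu2_gt0 := semi_regular_order_gt0 sr2 char2 head2.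
have [[e1_sym e1_irr] [e2_sym e2_irr]] := (sg1, sg2).
have := det_laplacian_add_ones R (join_rel_sym e1_sym e2_sym) (join_rel_irr e1_irr e2_irr).
rewrite addn_gt0 nu1_gt0 laplacian_join_add_ones det_ublock => /(_ isT).
rewrite (det_laplacian_semi_regular sg1 sr1 char1 head1) //.
rewrite (det_laplacian_semi_regular sg2 sr2 char2 head2) // !natrM => matrix_tree.
apply: (@mulfI _ ((nu1 + nu2)%:R * (nu1 + nu2)%:R)).
  by rewrite mulf_neq0 // pnatr_eq0 -lt0n addn_gt0 nu1_gt0.
rewrite -matrix_tree [(nu2 + nu1)%N]addnC.
set x1 := (q1 + nu2)%:R ^+ _; set x2 := (q2 + nu2)%:R ^+ _.
set x3 := (q3 + nu1)%:R ^+ _; set x4 := (q4 + nu1)%:R ^+ _.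
set p1 := \prod_(l <- behead lam) _; set p2 := \prod_(l <- behead mu) _.
ring.
Qed.
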